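(* Let $k$ be a field of characteristic $\neq 2$, and let $W=A\wr T$ be the wreath product of the abelian Lie algebras $A$ (basis $a_1,\dots,a_m$) and $T$ (basis $t_1,\dots,t_n$). Then $W$ has the presentation with generators $a_1,\dots,a_m,t_1,\dots,t_n$ and relations $[t_i,t_j]=0$ for $1\le i,j\le n$, and $[[a_k,t_{i_1},\dots,t_{i_r}],[a_l,t_{j_1},\dots,t_{j_s}]]=0$ for all $1\le k,l\le m$, all $r\ge 0$, $s\ge 0$ and all $i_1,\dots,i_r,j_1,\dots,j_s\in\{1,\dots,n\}$.
   Context: Left-normed brackets: $[y_1,\dots,y_n]=[[y_1,\dots,y_{n-1}],y_n]$ for $n>2$. Construction of $A\wr T$: $A$ and $T$ are finite-dimensional abelian Lie algebras over $k$ with bases $\{a_1,\dots,a_m\}$ and $\{t_1,\dots,t_n\}$. Let $U=U(T)=k[t_1,\dots,t_n]$ (the universal enveloping algebra of $T$) and let $B$ be the free right $U$-module with basis $\{a_1,\dots,a_m\}$; $B$ is a right Lie module over $T$ via the action of $T\subset U$. The wreath product is $W=A\wr T=B\oplus T$ (as vector spaces) with bracket $[b_1+s_1,b_2+s_2]=(b_1s_2-b_2s_1)+[s_1,s_2]$ for $b_i\in B$, $s_i\in T$, where $[s_1,s_2]=0$ as $T$ is abelian. Thus $[a_k,t_{i_1},\dots,t_{i_r}]$ corresponds to $a_k t_{i_1}\cdots t_{i_r}\in B$. *)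

From HB Require Import structures.
From mathcomp Require Import all_boot all_order all_algebra.
From mathcomp Require Import mpoly.
Set Implicit Arguments. Unset Strict Implicit. Unset Printing Implicit Defensive.
Import GRing.Theory.
Local Open Scope ring_scope.

Definition is_lie (k : fieldType) (L : lmodType k) (br : L -> L -> L) : Prop :=
  [/\ (forall (a : k) (x y z : L), br (a *: x + y) z = a *: br x z + br y z),
      (forall (a : k) (x y z : L), br x (a *: y + z) = a *: br x y + br x z),
      (forall x : L, br x x = 0)
    & (forall x y z : L, br x (br y z) + br y (br z x) + br z (br x y) = 0)].

Definition is_lie_hom (k : fieldType) (L1 L2 : lmodType k)
  (br1 : L1 -> L1 -> L1) (br2 : L2 -> L2 -> L2) (f : L1 -> L2) : Prop :=
  (forall (a : k) (x y : L1), f (a *: x + y) = a *: f x + f y) /\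
  (forall x y : L1, f (br1 x y) = br2 (f x) (f y)).

Definition lnbr (L : Type) (I : Type) (br : L -> L -> L) (y : I -> L)
  (x : L) (s : seq I) : L :=
  foldl (fun acc i => br acc (y i)) x s.

Definition wreath_relations (k : fieldType) (L : lmodType k) (m n : nat)
  (br : L -> L -> L) (x : 'I_m -> L) (y : 'I_n -> L) : Prop :=
  (forall i j : 'I_n, br (y i) (y j) = 0) /\
  (forall (p q : 'I_m) (s1 s2 : seq 'I_n),
      br (lnbr br y (x p) s1) (lnbr br y (x q) s2) = 0).

(* The wreath product W = A wr T = B (+) T, with B = U^m the free right
   U-module on a_1..a_m, U = k[t_1..t_n], and T = k^n. *)
Definition wreath (k : fieldType) (m n : nat) : lmodType k :=
  ({ffun 'I_m -> {mpoly k[n]}} * 'rV[k]_n)%type.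

Definition TtoU (k : fieldType) (n : nat) (s : 'rV[k]_n) : {mpoly k[n]} :=
  \sum_(i < n) s 0 i *: 'X_i.

(* [b1 + s1, b2 + s2] = (b1 s2 - b2 s1) + [s1, s2], with [s1, s2] = 0 *)
Definition wreath_br (k : fieldType) (m n : nat) (u v : wreath k m n)
  : wreath k m n :=
  ([ffun j => u.1 j * TtoU v.2 - v.1 j * TtoU u.2], 0).

Definition wreath_a (k : fieldType) (m n : nat) (p : 'I_m) : wreath k m n :=
  ([ffun j => if j == p then 1 else 0], 0).

Definition wreath_t (k : fieldType) (m n : nat) (i : 'I_n) : wreath k m n :=
  (0, delta_mx 0 i).

From HB Require Import structures.
From mathcomp Require Import all_boot all_order all_algebra.
From mathcomp Require Import mpoly ring.
From Stdlib Require Import FunctionalExtensionality.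
Set Implicit Arguments. Unset Strict Implicit. Unset Printing Implicit Defensive.
Import GRing.Theory.
Local Open Scope ring_scope.

(* Every element of W is a linear combination of the t_i and of the
   a_p X^mm = [a_p, t_i1, ..., t_ir], so a Lie morphism out of W is determined
   by the images of the generators.  Conversely, let x_p, y_i in L satisfy the
   relations.  The first relations make the operators ad y_i commute, hence L
   is a right module over U = k[t_1, ..., t_n] with z t_i = [z, y_i].  The map
   a_p q + s |-> x_p q + sum_i s_i y_i is then linear, sends [b, s] = b s to
   [x b, y s], and sends [B, B] = 0 to 0 because the second relations say that
   the x_p X^mm commute with each other. *)

Section LinearMaps.
Variables (k : fieldType) (U V : lmodType k) (f : U -> V).
Hypothesis f_lin : forall a u v, f (a *: u + v) = a *: f u + f v.

Let fL : {linear U -> V} := HB.pack f (GRing.isLinear.Build k U V *:%R f f_lin).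

Lemma lin0 : f 0 = 0. Proof. exact: raddf0 fL. Qed.
Lemma linD u v : f (u + v) = f u + f v. Proof. exact: raddfD fL u v. Qed.
Lemma linZ a u : f (a *: u) = a *: f u. Proof. exact: linearZ_LR fL a u. Qed.
Lemma linN u : f (- u) = - f u. Proof. exact: raddfN fL u. Qed.
Lemma linB u v : f (u - v) = f u - f v. Proof. exact: raddfB fL u v. Qed.
Lemma lin_sum (I : Type) (r : seq I) (P : pred I) (F : I -> U) :
  f (\sum_(i <- r | P i) F i) = \sum_(i <- r | P i) f (F i).
Proof. exact: (raddf_sum fL). Qed.

End LinearMaps.

Section LieFacts.
Variables (k : fieldType) (L : lmodType k) (br : L -> L -> L).
Hypothesis br_lie : is_lie br.

Lemma br_linl z a u v : br (a *: u + v) z = a *: br u z + br v z.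
Proof. by case: br_lie. Qed.
Lemma br_linr z a u v : br z (a *: u + v) = a *: br z u + br z v.
Proof. by case: br_lie. Qed.

Lemma brDl u v z : br (u + v) z = br u z + br v z.
Proof. exact: (linD (f := br^~ z) (br_linl z)). Qed.
Lemma brDr u v z : br z (u + v) = br z u + br z v.
Proof. exact: (linD (f := br z) (br_linr z)). Qed.
Lemma br0r z : br z 0 = 0.
Proof. exact: (lin0 (f := br z) (br_linr z)). Qed.
Lemma brNl u z : br (- u) z = - br u z.
Proof. exact: (linN (f := br^~ z) (br_linl z)). Qed.
Lemma brZl a u z : br (a *: u) z = a *: br u z.
Proof. exact: (linZ (f := br^~ z) (br_linl z)). Qed.
Lemma brZr a u z : br z (a *: u) = a *: br z u.
Proof. exact: (linZ (f := br z) (br_linr z)). Qed.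
Lemma br_suml (I : Type) (r : seq I) (P : pred I) (F : I -> L) z :
  br (\sum_(i <- r | P i) F i) z = \sum_(i <- r | P i) br (F i) z.
Proof. exact: (lin_sum (f := br^~ z) (br_linl z)). Qed.
Lemma br_sumr (I : Type) (r : seq I) (P : pred I) (F : I -> L) z :
  br z (\sum_(i <- r | P i) F i) = \sum_(i <- r | P i) br z (F i).
Proof. exact: (lin_sum (f := br z) (br_linr z)). Qed.

Lemma br_sum_eq0 (I J : Type) (r : seq I) (r' : seq J) (u : I -> L) (v : J -> L) :
  (forall i j, br (u i) (v j) = 0) -> br (\sum_(i <- r) u i) (\sum_(j <- r') v j) = 0.
Proof.
move=> uv0; rewrite br_suml big1 // => i _.
by rewrite br_sumr big1 // => j _; apply: uv0.
Qed.

Lemma br_anti u v : br u v = - br v u.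
Proof.
case: br_lie => _ _ brxx _; apply/eqP; rewrite -addr_eq0.
by have := brxx (u + v); rewrite brDl !brDr !brxx add0r addr0 addrC => ->.
Qed.

Lemma ad_comm a b z : br a b = 0 -> br (br z a) b = br (br z b) a.
Proof.
case: br_lie => _ _ _ jacobi ab0; have := jacobi a b z.
rewrite ab0 br0r addr0 (br_anti a) (br_anti b (br z a)) (br_anti b z) brNl opprK.
by move/eqP; rewrite subr_eq0 => /eqP.
Qed.

End LieFacts.

Section CommutingOperators.
Variables (I : eqType) (T : Type) (f : I -> T -> T).
Hypothesis f_comm : forall i j z, f i (f j z) = f j (f i z).

Notation apply_all := (foldl (fun z i => f i z)).

Lemma apply_all_rem z s i : i \in s -> apply_all z s = apply_all (f i z) (rem i s).
Proof.
elim: s z => // j s IH z; rewrite in_cons /=.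
case: eqVneq => [-> | ij] //= i_s.
by rewrite (IH _ i_s) f_comm.
Qed.

Lemma perm_apply_all z s1 s2 : perm_eq s1 s2 -> apply_all z s1 = apply_all z s2.
Proof.
elim: s1 z s2 => [|i s1 IH] z s2 /=; first by rewrite perm_sym => /perm_nilP ->.
move=> s12; have i_s2 : i \in s2 by rewrite -(perm_mem s12) mem_head.
rewrite (apply_all_rem _ i_s2); apply: IH.
by rewrite -(perm_cons i) (permPl s12) perm_to_rem.
Qed.

End CommutingOperators.

Section MonomialWords.
Variable n : nat.

Definition mword (mm : 'X_{1..n}) : seq 'I_n :=
  flatten [seq nseq (mm i) i | i <- enum 'I_n].

Lemma count_mword (a : pred 'I_n) mm :
  count a (mword mm) = (\sum_(i < n) a i * mm i)%N.
Proof.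
rewrite /mword count_flatten sumnE !big_map.
by apply: eq_bigr => i _; rewrite count_nseq.
Qed.

Lemma mword0 : mword 0 = [::].
Proof.
apply/nilP; rewrite /nilp -count_predT count_mword.
by rewrite big1 // => i _; rewrite mnm0E muln0.
Qed.

Lemma perm_mwordU mm i : perm_eq (mword (mm + U_(i))) (rcons (mword mm) i).
Proof.
apply/permP => a; rewrite -cats1 count_cat !count_mword /= addn0.
rewrite (bigD1 i) //= [X in _ = (X + _)%N](bigD1 i) //= addnAC.
rewrite mnmDE mnm1E eqxx mulnDr muln1; congr (_ + _)%N.
by apply: eq_bigr => j /negbTE ji; rewrite mnmDE mnm1E eq_sym ji addn0.
Qed.

Lemma prod_mword (R : comRingType) mm :
  \prod_(i <- mword mm) 'X_i = 'X_[mm] :> {mpoly R[n]}.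
Proof.
rewrite /mword big_flatten big_map big_enum mpolyXE_id /=.
apply: eq_bigr => i _; elim: (mm i) => [|c IH]; first by rewrite big_nil.
by rewrite big_cons IH exprS.
Qed.

End MonomialWords.

Section MonomialExtension.
Variables (k : fieldType) (L : lmodType k) (n : nat) (g : 'X_{1..n} -> L).

Definition mlinext (q : {mpoly k[n]}) : L := \sum_(mm <- msupp q) q@_mm *: g mm.

Lemma mlinext_supp q r : uniq r -> {subset msupp q <= r} ->
  mlinext q = \sum_(mm <- r) q@_mm *: g mm.
Proof.
move=> r_uniq qr; rewrite [RHS](bigID (mem (msupp q))) /=.
rewrite [X in _ = _ + X]big1 ?addr0 => [|mm /memN_msupp_eq0 ->]; last first.
  by rewrite scale0r.
rewrite -big_filter; apply: perm_big; apply: uniq_perm; rewrite ?filter_uniq //.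
by move=> mm; rewrite mem_filter andb_idr //; apply: qr.
Qed.

Lemma mlinext_lin a q1 q2 : mlinext (a *: q1 + q2) = a *: mlinext q1 + mlinext q2.
Proof.
pose r := undup (msupp q1 ++ msupp q2 ++ msupp (a *: q1 + q2)).
rewrite !(mlinext_supp (undup_uniq _ : uniq r)) => [|mm|mm|mm];
  rewrite ?mem_undup ?mem_cat; try by move=> ->; rewrite ?orbT.
rewrite scaler_sumr -big_split /=; apply: eq_bigr => mm _.
by rewrite mcoeffD mcoeffZ scalerDl scalerA.
Qed.

Lemma mlinextX mm : mlinext 'X_[mm] = g mm.
Proof. by rewrite /mlinext msuppX big_seq1 mcoeffX eqxx scale1r. Qed.

End MonomialExtension.

Section RowCombination.
Variables (k : fieldType) (L : lmodType k) (n : nat) (y : 'I_n -> L).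

Definition rowcomb (s : 'rV[k]_n) : L := \sum_(i < n) s 0 i *: y i.

Lemma rowcomb_lin a s t : rowcomb (a *: s + t) = a *: rowcomb s + rowcomb t.
Proof.
rewrite /rowcomb scaler_sumr -big_split; apply: eq_bigr => i _.
by rewrite !mxE scalerDl scalerA.
Qed.

Lemma rowcomb0 : rowcomb 0 = 0.
Proof. exact: (lin0 (f := rowcomb) rowcomb_lin). Qed.

Lemma rowcomb_delta i : rowcomb (delta_mx 0 i) = y i.
Proof.
rewrite /rowcomb (bigD1 i) //= big1 ?addr0 => [|j ji]; first by rewrite mxE !eqxx scale1r.
by rewrite mxE eqxx (negbTE ji) scale0r.
Qed.

End RowCombination.

Lemma TtoU_rowcomb (k : fieldType) (n : nat) : @TtoU k n = rowcomb (fun i => 'X_i).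
Proof. by []. Qed.

Lemma lie_hom_lnbr (L1 L2 I : Type) (br1 : L1 -> L1 -> L1) (br2 : L2 -> L2 -> L2)
    (y1 : I -> L1) (y2 : I -> L2) (h : L1 -> L2) :
  (forall u v, h (br1 u v) = br2 (h u) (h v)) -> (forall i, h (y1 i) = y2 i) ->
  forall z s, h (lnbr br1 y1 z s) = lnbr br2 y2 (h z) s.
Proof. by move=> h_br h_y z s; elim: s z => //= i s IH z; rewrite IH h_br h_y. Qed.

Section AdjointAction.
Variables (k : fieldType) (L : lmodType k) (br : L -> L -> L) (n : nat) (y : 'I_n -> L).
Hypotheses (br_lie : is_lie br) (y_comm : forall i j, br (y i) (y j) = 0).

Lemma perm_lnbr z s1 s2 : perm_eq s1 s2 -> lnbr br y z s1 = lnbr br y z s2.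
Proof.
apply: (perm_apply_all (f := fun i z => br z (y i))) => i j z' /=.
exact: (ad_comm br_lie z' (y_comm j i)).
Qed.

Definition mact (mm : 'X_{1..n}) (z : L) : L := lnbr br y z (mword mm).

Lemma mact0 z : mact 0 z = z.
Proof. by rewrite /mact mword0. Qed.

Lemma mactU mm i z : mact (mm + U_(i)) z = br (mact mm z) (y i).
Proof. by rewrite /mact (perm_lnbr _ (perm_mwordU mm i)) /lnbr foldl_rcons. Qed.

(* [pact q z] is [z q] for the right [U]-module structure on [L]. *)
Definition pact (q : {mpoly k[n]}) (z : L) : L := mlinext (mact ^~ z) q.

Lemma pact_lin z a q1 q2 : pact (a *: q1 + q2) z = a *: pact q1 z + pact q2 z.
Proof. exact: mlinext_lin. Qed.

Lemma pactZ a q z : pact (a *: q) z = a *: pact q z.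
Proof. exact: (linZ (f := pact^~ z) (pact_lin z)). Qed.

Lemma pact_sum (I : Type) (r : seq I) (P : pred I) (F : I -> {mpoly k[n]}) z :
  pact (\sum_(i <- r | P i) F i) z = \sum_(i <- r | P i) pact (F i) z.
Proof. exact: (lin_sum (f := pact^~ z) (pact_lin z)). Qed.

Lemma pactB q1 q2 z : pact (q1 - q2) z = pact q1 z - pact q2 z.
Proof. exact: (linB (f := pact^~ z) (pact_lin z)). Qed.

Lemma pact1 z : pact 1 z = z.
Proof. by rewrite /pact -mpolyX0 mlinextX mact0. Qed.

Lemma pact_mulX q i z : pact (q * 'X_i) z = br (pact q z) (y i).
Proof.
rewrite {1}(mpolyE q) mulr_suml pact_sum [pact q z]/pact /mlinext.
rewrite (br_suml br_lie); apply: eq_bigr => mm _.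
by rewrite -scalerAl -mpolyXD pactZ /pact mlinextX mactU (brZl br_lie).
Qed.

Lemma pact_mul_rowcomb q s z :
  pact (q * rowcomb (fun i => 'X_i) s) z = br (pact q z) (rowcomb y s).
Proof.
rewrite /rowcomb mulr_sumr pact_sum (br_sumr br_lie); apply: eq_bigr => i _.
by rewrite -scalerAr pactZ pact_mulX (brZr br_lie).
Qed.

End AdjointAction.

Section WreathAlgebra.
Variables (k : fieldType) (m n : nat).
Notation W := (wreath k m n).
Notation wbr := (@wreath_br k m n).
Notation wt := (@wreath_t k m n).

Lemma TtoU_lin a s t : TtoU (a *: s + t) = a *: TtoU s + TtoU t :> {mpoly k[n]}.
Proof. exact: rowcomb_lin. Qed.

Lemma TtoU0 : TtoU (0 : 'rV[k]_n) = 0.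
Proof. exact: rowcomb0. Qed.

Lemma TtoU_delta i : TtoU (delta_mx 0 i : 'rV[k]_n) = 'X_i.
Proof. exact: rowcomb_delta. Qed.

Lemma wreath_lie : is_lie wbr.
Proof.
split=> [a [b s] [b' s'] [b'' s'']|a [b s] [b' s'] [b'' s'']|[b s]|[b s] [b' s'] [b'' s'']];
  apply: injective_projections; rewrite /= ?scaler0 ?addr0 //;
  apply/ffunP => j; rewrite !ffunE ?TtoU_lin ?TtoU0 -?mul_mpolyC; ring.
Qed.

Lemma lnbr_snd0 z s : z.2 = 0 -> (lnbr wbr wt z s).2 = 0.
Proof. by elim: s z => //= i s IH z _; apply: IH. Qed.

Lemma wreath_br_snd0 u v : u.2 = 0 -> v.2 = 0 -> wbr u v = 0.
Proof.
move: u v => [b s] [b' s'] /= -> ->; apply: injective_projections => //=.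
by apply/ffunP => j; rewrite !ffunE TtoU0 !mulr0 subrr.
Qed.

Lemma wreath_rels : wreath_relations wbr (@wreath_a k m n) wt.
Proof.
split=> [i j | p q s1 s2]; last by apply: wreath_br_snd0; rewrite lnbr_snd0.
by apply: injective_projections => //=; apply/ffunP => p; rewrite !ffunE !mul0r subrr.
Qed.

Definition wreath_aq (p : 'I_m) (q : {mpoly k[n]}) : W :=
  ([ffun j => if j == p then q else 0], 0).

Lemma wreath_aq_lin p a q1 q2 :
  wreath_aq p (a *: q1 + q2) = a *: wreath_aq p q1 + wreath_aq p q2.
Proof.
apply: injective_projections; rewrite /= ?scaler0 ?addr0 //.
by apply/ffunP => j; rewrite !ffunE; case: eqP; rewrite ?scaler0 ?addr0.
Qed.

Lemma wreath_br_aq_t p q i : wbr (wreath_aq p q) (wt i) = wreath_aq p (q * 'X_i).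
Proof.
apply: injective_projections => //=; apply/ffunP => j.
by rewrite !ffunE TtoU_delta TtoU0 mulr0 subr0; case: eqP; rewrite ?mul0r.
Qed.

Lemma lnbr_aq p q s : lnbr wbr wt (wreath_aq p q) s = wreath_aq p (q * \prod_(i <- s) 'X_i).
Proof.
elim: s q => [|i s IH] q /=; first by rewrite big_nil mulr1.
by rewrite wreath_br_aq_t IH big_cons mulrA.
Qed.

Lemma lnbr_a_mword p mm : lnbr wbr wt (@wreath_a k m n p) (mword mm) = wreath_aq p 'X_[mm].
Proof. by rewrite (lnbr_aq p 1) mul1r prod_mword. Qed.

Lemma wreath_decomp (u : W) : u = \sum_(p < m) wreath_aq p (u.1 p) + rowcomb wt u.2.
Proof.
apply: injective_projections.
  rewrite /= !raddf_sum /= [X in _ + X]big1 ?addr0 => [|i _]; last by rewrite scaler0.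
  apply/ffunP => j; rewrite sum_ffunE (bigD1 j) //= big1 ?addr0 => [|p pj].
    by rewrite ffunE eqxx.
  by rewrite ffunE eq_sym (negbTE pj).
rewrite /= !raddf_sum /= big1 ?add0r; first exact: row_sum_delta.
by move=> p _.
Qed.

End WreathAlgebra.

Lemma wreath_lin_eq (k : fieldType) (m n : nat) (L : lmodType k)
    (h1 h2 : wreath k m n -> L) :
  (forall a u v, h1 (a *: u + v) = a *: h1 u + h1 v) ->
  (forall a u v, h2 (a *: u + v) = a *: h2 u + h2 v) ->
  (forall p mm, h1 (wreath_aq p 'X_[mm]) = h2 (wreath_aq p 'X_[mm])) ->
  (forall i, h1 (@wreath_t k m n i) = h2 (@wreath_t k m n i)) -> h1 =1 h2.
Proof.
move=> h1_lin h2_lin h_aX h_t u; rewrite (wreath_decomp u) /rowcomb.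
rewrite (linD h1_lin) (linD h2_lin) !(lin_sum h1_lin) !(lin_sum h2_lin).
congr (_ + _); last by apply: eq_bigr => i _; rewrite (linZ h1_lin) (linZ h2_lin) h_t.
apply: eq_bigr => p _.
rewrite (mpolyE (u.1 p)) (lin_sum (wreath_aq_lin p)) (lin_sum h1_lin) (lin_sum h2_lin).
apply: eq_bigr => mm _.
by rewrite (linZ (wreath_aq_lin p)) (linZ h1_lin) (linZ h2_lin) h_aX.
Qed.

Section WreathLift.
Variables (k : fieldType) (m n : nat) (L : lmodType k) (br : L -> L -> L).
Variables (x : 'I_m -> L) (y : 'I_n -> L).
Hypotheses (br_lie : is_lie br) (rels : wreath_relations br x y).

Let y_comm : forall i j, br (y i) (y j) = 0. Proof. by case: rels. Qed.

Definition liftB (b : {ffun 'I_m -> {mpoly k[n]}}) : L :=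
  \sum_(p < m) pact br y (b p) (x p).

Definition wreath_lift (u : wreath k m n) : L := liftB u.1 + rowcomb y u.2.

Lemma liftB_br b b' : br (liftB b) (liftB b') = 0.
Proof.
apply: br_sum_eq0 => // p q; apply: br_sum_eq0 => // mm mm'.
by rewrite (brZl br_lie) (brZr br_lie); case: rels => _ ->; rewrite !scaler0.
Qed.

Lemma rowcomb_br s s' : br (rowcomb y s) (rowcomb y s') = 0.
Proof.
by apply: br_sum_eq0 => // i j; rewrite (brZl br_lie) (brZr br_lie) y_comm !scaler0.
Qed.

Lemma wreath_lift_lin a u v : wreath_lift (a *: u + v) = a *: wreath_lift u + wreath_lift v.
Proof.
move: u v => [b s] [b' s']; rewrite /wreath_lift /liftB /=.
under eq_bigr do rewrite !ffunE pact_lin.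
by rewrite big_split /= -scaler_sumr rowcomb_lin scalerDr addrACA.
Qed.

Lemma wreath_lift_br u v : wreath_lift (wreath_br u v) = br (wreath_lift u) (wreath_lift v).
Proof.
move: u v => [b s] [b' s']; rewrite /wreath_lift /liftB /= rowcomb0 addr0.
under eq_bigr do rewrite ffunE pactB TtoU_rowcomb !pact_mul_rowcomb //.
rewrite sumrB -!(br_suml br_lie) !(brDl br_lie) !(brDr br_lie).
rewrite liftB_br rowcomb_br add0r addr0.
by rewrite [br (rowcomb y s) _](br_anti br_lie) addrC.
Qed.

Lemma wreath_lift_a p : wreath_lift (@wreath_a k m n p) = x p.
Proof.
rewrite /wreath_lift /liftB /= rowcomb0 addr0 (bigD1 p) //= big1 ?addr0 => [|q qp].
  by rewrite ffunE eqxx pact1.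
by rewrite ffunE (negbTE qp) /pact /mlinext msupp0 big_nil.
Qed.

Lemma wreath_lift_t i : wreath_lift (@wreath_t k m n i) = y i.
Proof.
rewrite /wreath_lift /liftB /= rowcomb_delta big1 ?add0r // => p _.
by rewrite ffunE /pact /mlinext msupp0 big_nil.
Qed.

End WreathLift.

Theorem corollary2 (k : fieldType) (m n : nat) (hchar : (2%:R : k) != 0) :
  is_lie (@wreath_br k m n) /\
  wreath_relations (@wreath_br k m n) (@wreath_a k m n) (@wreath_t k m n) /\
  (forall (L : lmodType k) (br : L -> L -> L) (x : 'I_m -> L) (y : 'I_n -> L),
     is_lie br -> wreath_relations br x y ->
     exists! f : wreath k m n -> L,
       is_lie_hom (@wreath_br k m n) br f /\
       (forall p, f (@wreath_a k m n p) = x p) /\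
       (forall i, f (@wreath_t k m n i) = y i)).
Proof.
split; first exact: wreath_lie.
split; first exact: wreath_rels.
move=> L br x y br_lie rels.
have lift_hom : is_lie_hom (@wreath_br k m n) br (wreath_lift br x y).
  by split; [exact: wreath_lift_lin | exact: wreath_lift_br].
exists (wreath_lift br x y); split.
  by split; [|split; [exact: wreath_lift_a | exact: wreath_lift_t]].
move=> h [[h_lin h_br] [h_a h_t]]; apply: functional_extensionality.
apply: wreath_lin_eq => [||p mm|i]; rewrite ?wreath_lift_t ?h_t //.
- exact: wreath_lift_lin.
- rewrite -lnbr_a_mword (lie_hom_lnbr lift_hom.2 (wreath_lift_t br x y)).
  by rewrite (lie_hom_lnbr h_br h_t) h_a wreath_lift_a.
Qed.
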